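(* Let $q=p^a$, let $\iota:\mathbf Z_p\to\mathbf C$ be an embedding of rings, and let $(M,F)$ satisfy (M1)–(M4). Then complex conjugation on $M\otimes\mathbf C$ maps the subspace $M^s\otimes_{\mathbf Z_p,\iota}\mathbf C$ onto $M^{2-s}\otimes_{\mathbf Z_p,\iota}\mathbf C$ for $s=0,1,2$. In particular the decomposition $M\otimes\mathbf C=\bigoplus_s M^s\otimes_{\mathbf Z_p,\iota}\mathbf C$ (with $M^s\otimes_{\mathbf Z_p,\iota}\mathbf C$ in Hodge type $(s,2-s)$) is a $\mathbf Z$-Hodge structure on $M$.
   Context: $M$ is a free $\mathbf Z$-module of finite rank with a symmetric bilinear form $\langle-,-\rangle$ and $F$ an endomorphism of $M$. (M1) $\langle-,-\rangle$ is unimodular, even, of signature $(3,19)$; (M2) $\langle Fx,Fy\rangle=q^2\langle x,y\rangle$ for all $x,y$; (M3) $F$ is semisimple on $M\otimes\mathbf C$ with all eigenvalues of absolute value $q$; (M4) the $\mathbf Z_p[F]$-module $M\otimes\mathbf Z_p$ decomposes as $M^0\oplus M^1\oplus M^2$ with $FM^s=q^sM^s$ and $M^0,M^1,M^2$ free of ranks $1,20,1$. Here $M\otimes\mathbf C=(M\otimes\mathbf Z_p)\otimes_{\mathbf Z_p,\iota}\mathbf C$. *)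

From HB Require Import structures.
From mathcomp Require Import all_boot all_order all_algebra.
Set Implicit Arguments. Unset Strict Implicit. Unset Printing Implicit Defensive.
Import Order.TTheory GRing.Theory Num.Theory.
Local Open Scope ring_scope.

(* p-adic integers.  Z_p is not in the library; we characterise it up *)
(* to (unique) isomorphism as a commutative ring R which is p-adically *)
(* separated and complete with R / p^n R = Z / p^n Z, i.e. the natural *)
(* map R -> lim_n Z/p^n Z is a ring isomorphism.                       *)

Definition pdvd (R : pzRingType) (p n : nat) (x : R) : Prop :=
  exists y : R, x = (p ^ n)%N%:R * y.

Definition is_padic_integers (R : comNzRingType) (p : nat) : Prop :=
  [/\
      forall x : R, (forall n, pdvd p n x) -> x = 0,
      forall (x : R) (n : nat), exists k : int, pdvd p n (x - k%:~R),
      forall k : nat -> int, (forall n, ((p ^ n)%N%:Z %| k n.+1 - k n)%Z) ->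
        exists x : R, forall n, pdvd p n (x - (k n)%:~R)
    &
      forall (k : int) (n : nat), pdvd p n (k%:~R : R) -> ((p ^ n)%N%:Z %| k)%Z].

(* Lattices: M = Z^n with a symmetric bilinear form given by B.        *)

Definition intmx (R : pzRingType) (m n : nat) (A : 'M[int]_(m, n)) : 'M[R]_(m, n) :=
  map_mx (fun z : int => z%:~R) A.

Definition unimodular (n : nat) (B : 'M[int]_n) : Prop :=
  \det B = 1 \/ \det B = -1.

Definition even_form (n : nat) (B : 'M[int]_n) : Prop :=
  forall x : 'cV[int]_n, (2 %| (x^T *m B *m x) ord0 ord0)%Z.

(* signature (r, s) (Sylvester): diagonalisable over Q (hence over R)
   with r positive and s negative diagonal entries and no zero entries *)
Definition has_signature (n : nat) (B : 'M[int]_n) (r s : nat) : Prop :=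
  exists (P : 'M[rat]_n) (d : 'rV[rat]_n),
    [/\ P \in unitmx, P^T *m intmx rat B *m P = diag_mx d,
        #|[set i | 0 < d ord0 i]| = r, #|[set i | d ord0 i < 0]| = s
      & forall i, d ord0 i != 0].

Definition block_span (R : pzRingType) (n : nat) (P : 'M[R]_n)
  (blk : 'I_n -> 'I_3) (s : 'I_3) (x : 'cV[R]_n) : Prop :=
  exists v : 'cV[R]_n, (forall i, blk i != s -> v i ord0 = 0) /\ x = P *m v.

(* entrywise complex conjugation on C^n, i.e. on M (x) C *)
Definition conj_vec (C : numClosedFieldType) (n : nat) (y : 'cV[C]_n) : 'cV[C]_n :=
  map_mx (fun z : C => z^*) y.

(* A Z-Hodge structure of weight 2 on M = Z^n: a decomposition
   M (x) C = H^{2,0} (+) H^{1,1} (+) H^{0,2} into C-subspaces with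
   conj(H^{p,q}) = H^{q,p}.  H s is the piece H^{s,2-s}. *)
Definition Z_hodge_structure_wt2 (C : numClosedFieldType) (n : nat)
  (H : 'I_3 -> 'cV[C]_n -> Prop) : Prop :=
  [/\
      forall s, H s 0 /\ (forall (c : C) x y, H s x -> H s y -> H s (c *: x + y)),
      forall y, exists y0 y1 y2, [/\ H 0 y0, H 1 y1, H 2 y2 & y = y0 + y1 + y2],
      forall y0 y1 y2, H 0 y0 -> H 1 y1 -> H 2 y2 -> y0 + y1 + y2 = 0 ->
        [/\ y0 = 0, y1 = 0 & y2 = 0]
    &
      forall s y, H s y -> H (rev_ord s) (conj_vec y)].

From HB Require Import structures.
From mathcomp Require Import all_boot all_order all_algebra.
Set Implicit Arguments. Unset Strict Implicit. Unset Printing Implicit Defensive.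
Import Order.TTheory GRing.Theory Num.Theory.
Local Open Scope ring_scope.

(* Since F has integer entries, F is fixed by complex conjugation, so conjugation
   carries a vector killed by a polynomial f(F) to one killed by conj(f)(F).
   On M^s (x) C the Frobenius is q^s times an operator invertible over Z_p, so
   its eigenvalues are q^s times integral units.  If z^* has weight s and z has
   weight t, then |z| = q gives (z^*/q^s)(z/q^t) = q^(2-s-t), again an integral
   unit; as 1/p is not integral over Z_p, this forces s + t = 2.  Hence the
   conjugate of a vector of M^s (x) C has no component outside M^(2-s) (x) C. *)

Lemma padic_nat_p_nonunit (R : comNzRingType) (p : nat) :
  prime p -> is_padic_integers R p -> forall y : R, p%:R * y <> 1.
Proof.
move=> pr_p [_ _ _ lift_dvd] y pyE.
have /lift_dvd : pdvd p 1 (1%:~R : R) by exists y; rewrite expn1 pyE.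
rewrite dvdzE /= expn1 dvdn1 => /eqP p1.
by move: (prime_gt1 pr_p); rewrite p1.
Qed.

Section Integrality.

Variables (R : comNzRingType) (C : numClosedFieldType) (iota : {rmorphism R -> C}).

Lemma eigenvalue_integral (n : nat) (K : 'M[R]_n) (z : C) :
  eigenvalue (map_mx iota K) z -> integralOver iota z.
Proof.
rewrite eigenvalue_root_char -map_char_poly => z_root.
by exists (char_poly K) => //; apply: char_poly_monic.
Qed.

Lemma eigenvalue_integral_inv (n : nat) (K Ki : 'M[R]_n) (z : C) :
  map_mx iota K *m map_mx iota Ki = 1%:M ->
  eigenvalue (map_mx iota K) z -> integralOver iota z^-1.
Proof.
move=> KKi /eigenvalueP[v vK v_neq0]; apply: (@eigenvalue_integral _ Ki).
have vE : v = z *: (v *m map_mx iota Ki) by rewrite scalemxAl -vK -mulmxA KKi mulmx1.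
have z_neq0 : z != 0 by apply: contra v_neq0 => /eqP z0; rewrite vE z0 scale0r.
by apply/eigenvalueP; exists v; rewrite // {2}vE scalerA mulVf // scale1r.
Qed.

Variable p : nat.
Hypotheses (iota_inj : injective iota) (p_gt0 : (0 < p)%N)
  (p_nonunit : forall y : R, p%:R * y <> 1).

(* Clearing denominators in a monic equation for 1/p exhibits 1 as a multiple of p. *)
Lemma not_integral_invp : ~ integralOver iota (p%:R^-1).
Proof.
move=> [r r_monic r_root].
have p_neq0 : (p%:R : C) != 0 by rewrite pnatr_eq0 -lt0n.
have szE : size r = (size r).-1.+1 by rewrite prednK // lt0n size_poly_eq0 monic_neq0.
set d := (size r).-1 in szE.
have lead1 : r`_d = 1 by move/monicP: r_monic; rewrite lead_coefE.
move: r_root; rewrite rootE horner_coef size_map_inj_poly ?rmorph0 // szE big_ord_recr /=.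
rewrite coef_map /= lead1 rmorph1 mul1r => /eqP/(congr1 ( *%R (p%:R ^+ d))).
rewrite mulr0 mulrDr exprVn divff ?expf_neq0 // mulr_sumr => /eqP.
rewrite addr_eq0 => /eqP sumE.
apply: (p_nonunit (y := - \sum_(i < d) r`_i * (p%:R : R) ^+ (d - i.+1))).
apply: iota_inj; rewrite rmorph1 rmorphM rmorphN rmorph_sum /= rmorph_nat mulrN mulr_sumr.
rewrite -[RHS]opprK -sumE; congr (- _); apply: eq_bigr => i _.
rewrite coef_map rmorphM rmorphXn rmorph_nat /= exprVn mulrCA.
by rewrite -exprS subnSK // [RHS]mulrCA -expfB.
Qed.

Lemma not_integral_invpX (m : nat) : (0 < m)%N -> ~ integralOver iota ((p%:R ^+ m)^-1).
Proof.
move=> m_gt0 int_invpX; apply: not_integral_invp.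
have p_neq0 : (p%:R : C) != 0 by rewrite pnatr_eq0 -lt0n.
have -> : (p%:R^-1 : C) = p%:R ^+ m.-1 * (p%:R ^+ m)^-1.
  by rewrite -(prednK m_gt0) exprS invfM mulrCA divff ?expf_neq0 // mulr1.
by apply: integral_mul => //; rewrite -natrX; apply: integral_nat.
Qed.

Lemma eigenvalue_scale (F : fieldType) (n : nat) (K : 'M[F]_n) (c w : F) :
  c != 0 -> eigenvalue (c *: K) w -> eigenvalue K (w / c).
Proof.
move=> c_neq0 /eigenvalueP[v vK v_neq0]; apply/eigenvalueP; exists v => //.
by apply: (scalerI c_neq0); rewrite scalemxAr vK scalerA mulrC mulfVK.
Qed.

Variable a : nat.
Hypothesis a_gt0 : (0 < a)%N.
Let q : C := p%:R ^+ a.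

Lemma eigenvalue_weights_sum (n : nat) (Ks Kis Kt Kit : 'M[R]_n) (s t : nat) (z : C) :
  map_mx iota Ks *m map_mx iota Kis = 1%:M ->
  map_mx iota Kt *m map_mx iota Kit = 1%:M ->
  eigenvalue (q ^+ s *: map_mx iota Ks) z^* ->
  eigenvalue (q ^+ t *: map_mx iota Kt) z ->
  `|z| = q -> (s + t = 2)%N.
Proof.
move=> KsKis KtKit z_s z_t normz.
have q_neq0 : q != 0 by rewrite expf_neq0 // pnatr_eq0 -lt0n.
have eig_s := eigenvalue_scale (expf_neq0 s q_neq0) z_s.
have eig_t := eigenvalue_scale (expf_neq0 t q_neq0) z_t.
have [int_uv int_uv_inv] : integralOver iota (z^* / q ^+ s * (z / q ^+ t)) /\
                           integralOver iota (z^* / q ^+ s * (z / q ^+ t))^-1.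
  rewrite invfM; split; apply: integral_mul.
  - exact: eigenvalue_integral eig_s.
  - exact: eigenvalue_integral eig_t.
  - exact: eigenvalue_integral_inv KsKis eig_s.
  - exact: eigenvalue_integral_inv KtKit eig_t.
have uvE : z^* / q ^+ s * (z / q ^+ t) = q ^+ 2 / q ^+ (s + t).
  by rewrite mulrACA [z^* * z]mulrC -normCK normz exprD invfM.
have not_int_invqX k : (0 < k)%N -> integralOver iota ((q ^+ k)^-1) -> False.
  by move=> k_gt0; rewrite -exprM; apply: not_integral_invpX; rewrite muln_gt0 a_gt0.
rewrite uvE in int_uv int_uv_inv; case: (ltngtP (s + t) 2) => // st; exfalso.
- apply: (not_int_invqX (2 - (s + t))%N); first by rewrite subn_gt0.
  by rewrite expfB.
- apply: (not_int_invqX (s + t - 2)%N); first by rewrite subn_gt0.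
  by rewrite expfB // invf_div.
Qed.

End Integrality.

Definition is_subspace (R : pzRingType) (n : nat) (V : 'cV[R]_n -> Prop) : Prop :=
  V 0 /\ forall (c : R) x y, V x -> V y -> V (c *: x + y).

Lemma is_subspaceD (R : pzRingType) (n : nat) (V : 'cV[R]_n -> Prop) x y :
  is_subspace V -> V x -> V y -> V (x + y).
Proof. by move=> [_ V_lin] Vx Vy; rewrite -[x]scale1r; apply: V_lin. Qed.

Lemma is_subspaceZ (R : pzRingType) (n : nat) (V : 'cV[R]_n -> Prop) (c : R) x :
  is_subspace V -> V x -> V (c *: x).
Proof. by move=> [V0 V_lin] Vx; rewrite -[_ *: _]addr0; apply: V_lin. Qed.

Section Annihilators.

Variables (K : fieldType) (n : nat).

Lemma horner_mx_mulmxE (A : 'M[K]_n.+1) (f : {poly K}) (c : K) (y : 'cV[K]_n.+1) :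
  horner_mx A (f * 'X + c%:P) *m y = horner_mx A f *m (A *m y) + c *: y.
Proof.
by rewrite rmorphD rmorphM /= horner_mx_X horner_mx_C mulmxDl -mulmxA mul_scalar_mx.
Qed.

Variable A : 'M[K]_n.+1.

Lemma horner_mx_stable (V : 'cV[K]_n.+1 -> Prop) :
  is_subspace V -> (forall y, V y -> V (A *m y)) ->
  forall f y, V y -> V (horner_mx A f *m y).
Proof.
move=> [V0 V_lin] V_A f; elim/poly_ind: f => [|f c IHf] y Vy.
  by rewrite rmorph0 mul0mx.
by rewrite horner_mx_mulmxE addrC; apply: V_lin => //; exact: IHf (V_A _ Vy).
Qed.

Lemma horner_mx_eq_on (B : 'M[K]_n.+1) (V : 'cV[K]_n.+1 -> Prop) :
  (forall y, V y -> V (A *m y)) -> (forall y, V y -> A *m y = B *m y) ->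
  forall f y, V y -> horner_mx A f *m y = horner_mx B f *m y.
Proof.
move=> V_A AB f; elim/poly_ind: f => [|f c IHf] y Vy.
  by rewrite !rmorph0 !mul0mx.
by rewrite !horner_mx_mulmxE -AB // IHf //; apply: V_A.
Qed.

Lemma horner_mx_gcdp_ann (f g : {poly K}) (w : 'cV[K]_n.+1) :
  horner_mx A f *m w = 0 -> horner_mx A g *m w = 0 ->
  horner_mx A (gcdp f g) *m w = 0.
Proof.
move=> fw gw; have [[u v] /eqpP[[c1 c2] /andP[/= _ c2_neq0] uvE]] := Bezoutp f g.
apply: (scalerI c2_neq0); rewrite scaler0 scalemxAl -horner_mxZ -uvE horner_mxZ.
by rewrite -scalemxAl /= rmorphD !rmorphM mulmxDl -!mulmxA fw gw !mulmx0 addr0 scaler0.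
Qed.

Lemma horner_mx_coprimep_ann (f g : {poly K}) (w : 'cV[K]_n.+1) :
  coprimep f g -> horner_mx A f *m w = 0 -> horner_mx A g *m w = 0 -> w = 0.
Proof.
move=> /Bezout_eq1_coprimepP[[u v] /= uvE] fw gw.
have := congr1 (fun r => horner_mx A r *m w) uvE.
by rewrite /= rmorph1 mul1mx rmorphD !rmorphM mulmxDl -!mulmxA fw gw !mulmx0 addr0.
Qed.

End Annihilators.

Definition conj_poly (C : numClosedFieldType) (f : {poly C}) : {poly C} :=
  map_poly (@Num.conj C) f.

Section HodgeSymmetry.

Variables (C : numClosedFieldType) (n : nat) (F : 'M[C]_n.+1).
Variable V : 'I_3 -> 'cV[C]_n.+1 -> Prop.
Hypotheses (V_sub : forall s, is_subspace (V s)) (V_F : forall s y, V s y -> V s (F *m y)).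
Hypothesis V_span : forall y, exists y0 y1 y2,
  [/\ V 0 y0, V 1 y1, V 2%:R y2 & y = y0 + y1 + y2].
Hypothesis V_direct : forall y0 y1 y2, V 0 y0 -> V 1 y1 -> V 2%:R y2 ->
  y0 + y1 + y2 = 0 -> [/\ y0 = 0, y1 = 0 & y2 = 0].
Hypothesis F_real : map_mx (@Num.conj C) F = F.
Variable H : 'I_3 -> 'M[C]_n.+1.
Hypothesis F_eq_H : forall s y, V s y -> F *m y = H s *m y.
Hypothesis H_weights : forall (s t : 'I_3) z,
  eigenvalue (H s) z^* -> eigenvalue (H t) z -> eigenvalue F z -> (s + t = 2)%N.

Lemma char_poly_block_ann (s : 'I_3) y : V s y -> horner_mx F (char_poly (H s)) *m y = 0.
Proof.
by move=> Vy; rewrite (horner_mx_eq_on (@V_F s) (@F_eq_H s)) // Cayley_Hamilton mul0mx.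
Qed.

Lemma conj_vec_horner_mx (f : {poly C}) y :
  conj_vec (horner_mx F f *m y) = horner_mx F (conj_poly f) *m conj_vec y.
Proof. by rewrite /conj_vec map_mxM map_horner_mx F_real. Qed.

(* A common root x of the two annihilators would be an eigenvalue of F
   with x^* of weight s and x of weight t. *)
Lemma block_conj_char_poly_ann (s t : 'I_3) w :
  t != rev_ord s -> V t w -> horner_mx F (conj_poly (char_poly (H s))) *m w = 0 -> w = 0.
Proof.
move=> t_neq Vw conj_ann.
apply: (horner_mx_coprimep_ann (A := F) (g := char_poly (H t))
  (f := gcdp (conj_poly (char_poly (H s))) (char_poly F))).
- apply: Pdiv.ClosedField.root_coprimep => x; rewrite root_gcd => /andP[x_conj x_F].
  apply/negP => x_t; move/negP: t_neq; apply; apply/eqP/val_inj => /=.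
  have st : (s + t = 2)%N.
    apply: (H_weights (z := x)); rewrite eigenvalue_root_char //.
    by move: x_conj; rewrite /root -{1}[x]conjCK horner_map conjC_eq0.
  by apply/eqP; rewrite subSS -(eqn_add2l s) st subnKC // -ltnS.
- by apply: horner_mx_gcdp_ann; last rewrite Cayley_Hamilton mul0mx.
- exact: char_poly_block_ann.
Qed.

Lemma conj_block_rev (s : 'I_3) y : V s y -> V (rev_ord s) (conj_vec y).
Proof.
move=> Vy; have [y0 [y1 [y2 [V0 V1 V2 yE]]]] := V_span (conj_vec y).
set phi := conj_poly (char_poly (H s)).
have stab t w : V t w -> V t (horner_mx F phi *m w).
  by apply: horner_mx_stable; [apply: V_sub | apply: (@V_F t)].
have ann_conj : horner_mx F phi *m conj_vec y = 0.
  by rewrite -conj_vec_horner_mx char_poly_block_ann // /conj_vec map_mx0.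
rewrite yE !mulmxDr in ann_conj.
have [ann0 ann1 ann2] := V_direct (stab _ _ V0) (stab _ _ V1) (stab _ _ V2) ann_conj.
have in_rev t w : V t w -> horner_mx F phi *m w = 0 -> V (rev_ord s) w.
  move=> Vw ann_w; have [<- //|t_neq] := eqVneq t (rev_ord s).
  by rewrite (block_conj_char_poly_ann t_neq Vw ann_w); case: (V_sub (rev_ord s)).
rewrite yE; apply: is_subspaceD (V_sub _) _ (in_rev _ _ V2 ann2).
exact: is_subspaceD (V_sub _) (in_rev _ _ V0 ann0) (in_rev _ _ V1 ann1).
Qed.

End HodgeSymmetry.

Lemma ord3P (b : 'I_3) : [\/ b = 0, b = 1 | b = 2%:R].
Proof.
by case: b => [[|[|[|//]]] lt_b3]; [constructor 1 | constructor 2 | constructor 3];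
  apply: val_inj.
Qed.

Lemma mulmx_delta_col (R : pzSemiRingType) (m n : nat) (M : 'M[R]_(m, n)) i j :
  (M *m delta_mx j (0 : 'I_1)) i 0 = M i j.
Proof. by rewrite -colE mxE. Qed.

Section BlockProjections.

Variables (R : comPzRingType) (n : nat) (blk : 'I_n -> 'I_3).

Definition block_coord_proj (s : 'I_3) : 'M[R]_n := diag_mx (\row_i (blk i == s)%:R).

Local Notation D := block_coord_proj.

Lemma block_coord_proj_supportP (s : 'I_3) (v : 'cV[R]_n) :
  (forall i, blk i != s -> v i 0 = 0) <-> D s *m v = v.
Proof.
rewrite mul_diag_mx; split=> [v_supp | /matrixP vE i /negPf blk_i].
  apply/matrixP => i j; rewrite ord1 !mxE.
  by have [_ | /v_supp ->] := eqVneq (blk i) s; rewrite ?mul1r ?mulr0.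
by rewrite -vE !mxE blk_i mul0r.
Qed.

Lemma block_coord_proj_mul (s t : 'I_3) : D s *m D t = if s == t then D s else 0.
Proof.
apply/matrixP => i j; rewrite mulmx_diag !mxE; have [<- | st] := eqVneq s t.
  by rewrite !mxE; case: (blk i == s); rewrite ?mulr1 ?mul0r.
rewrite mxE; case: (blk i =P s) => [-> | _]; last by rewrite mul0r mul0rn.
by rewrite (negPf st) mulr0 mul0rn.
Qed.

Lemma block_coord_proj_sum : D 0 + D 1 + D 2%:R = 1%:M.
Proof.
apply/matrixP => i j; rewrite !mxE -!mulrnDl.
by case: (ord3P (blk i)) => ->; rewrite /= ?addr0 ?add0r.
Qed.

Lemma block_span_subspace (P : 'M[R]_n) (s : 'I_3) : is_subspace (block_span P blk s).
Proof.
split=> [|c x y [v [v_supp ->]] [w [w_supp ->]]].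
  by exists 0; rewrite mulmx0; split=> // i _; rewrite mxE.
exists (c *: v + w); split; last by rewrite mulmxDr scalemxAr.
by move=> i blk_i; rewrite !mxE v_supp // w_supp // mulr0 addr0.
Qed.

Variables (P Q : 'M[R]_n).
Hypotheses (PQ : P *m Q = 1%:M) (QP : Q *m P = 1%:M).

Definition block_proj (s : 'I_3) : 'M[R]_n := P *m D s *m Q.

Lemma block_projM (s t : 'I_3) :
  block_proj s *m block_proj t = if s == t then block_proj s else 0.
Proof.
rewrite /block_proj -!mulmxA (mulmxA Q) QP mul1mx (mulmxA (D s)) block_coord_proj_mul.
by case: eqP; rewrite ?mulmxA // mulmx0 mul0mx.
Qed.

Lemma block_proj_sum : block_proj 0 + block_proj 1 + block_proj 2%:R = 1%:M.
Proof. by rewrite /block_proj -!mulmxDl -!mulmxDr block_coord_proj_sum mulmx1. Qed.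

Lemma block_spanP (s : 'I_3) (y : 'cV[R]_n) : block_span P blk s y <-> block_proj s *m y = y.
Proof.
split=> [[v [/block_coord_proj_supportP vE ->]] | yE].
  by rewrite /block_proj -!mulmxA (mulmxA Q) QP mul1mx vE.
exists (Q *m y); split; last by rewrite mulmxA PQ mul1mx.
by apply/block_coord_proj_supportP; rewrite -{2}yE /block_proj !mulmxA QP mul1mx.
Qed.

Lemma block_span_decomp (y : 'cV[R]_n) : exists y0 y1 y2,
  [/\ block_span P blk 0 y0, block_span P blk 1 y1, block_span P blk 2%:R y2
    & y = y0 + y1 + y2].
Proof.
have in_span t : block_span P blk t (block_proj t *m y).
  exists (D t *m Q *m y); split; last by rewrite /block_proj !mulmxA.
  by apply/block_coord_proj_supportP; rewrite !mulmxA block_coord_proj_mul eqxx.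
exists (block_proj 0 *m y), (block_proj 1 *m y), (block_proj 2%:R *m y).
split; [exact: in_span.. |].
by rewrite -[LHS]mul1mx -block_proj_sum !mulmxDl.
Qed.

Lemma block_span_direct (y0 y1 y2 : 'cV[R]_n) :
  block_span P blk 0 y0 -> block_span P blk 1 y1 -> block_span P blk 2%:R y2 ->
  y0 + y1 + y2 = 0 -> [/\ y0 = 0, y1 = 0 & y2 = 0].
Proof.
have projE s t y : block_span P blk s y -> block_proj t *m y = if t == s then y else 0.
  move=> /block_spanP yE; rewrite -{1}yE mulmxA block_projM.
  by case: eqP => [-> | _]; rewrite ?mul0mx.
move=> /projE y0E /projE y1E /projE y2E sum0.
have proj_sum t : block_proj t *m (y0 + y1 + y2) = 0 by rewrite sum0 mulmx0.
move: (proj_sum 0) (proj_sum 1) (proj_sum 2%:R); rewrite !mulmxDr !y0E !y1E !y2E /=.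
by rewrite !addr0 !add0r.
Qed.

End BlockProjections.

Lemma scalemx_lregI (R : pzRingType) (m n : nat) (c : R) (M N : 'M[R]_(m, n)) :
  GRing.lreg c -> c *: M = c *: N -> M = N.
Proof.
move=> c_reg /matrixP MN; apply/matrixP => i j.
by have := MN i j; rewrite !mxE => /c_reg.
Qed.

Section BlockDivision.

Variables (R : comNzRingType) (n : nat) (blk : 'I_n -> 'I_3) (s : 'I_3).
Variables (G : 'M[R]_n) (c : R).
Hypothesis c_reg : GRing.lreg c.

Local Notation D := (@block_coord_proj R n blk s).
Local Notation e j := (delta_mx j (0 : 'I_1) : 'cV[R]_n).

Hypothesis G_div : forall v : 'cV[R]_n, D *m v = v -> exists2 w, D *m w = w & G *m v = c *: w.
Hypothesis G_onto : forall w : 'cV[R]_n, D *m w = w -> exists2 v, D *m v = v & G *m v = c *: w.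

Lemma block_coord_proj_delta (j : 'I_n) : blk j = s -> D *m e j = e j.
Proof.
move=> blk_j; apply/block_coord_proj_supportP => i blk_i; rewrite mxE.
by have [ij | //] := eqVneq i j; rewrite ij blk_j eqxx in blk_i.
Qed.

Lemma matrix_of_cols (P : 'I_n -> 'cV[R]_n -> Prop) :
  (forall j, exists w, P j w) -> exists A : 'M[R]_n, forall j, P j (A *m e j).
Proof.
move=> P_ex; have [wf wfP] := @fin_all_exists _ (fun=> 'cV[R]_n) P P_ex.
exists (\matrix_(i, j) wf j i 0) => j.
suff -> : \matrix_(i, j) wf j i 0 *m e j = wf j by [].
by apply/matrixP => i k; rewrite ord1 mulmx_delta_col mxE.
Qed.

(* The columns of A in block s are the quotients G e_j / c; the other columns,
   like those of Z, are the standard basis vectors, so that A Z = 1. *)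
Lemma block_div_operator : exists A Z : 'M[R]_n,
  [/\ A *m Z = 1%:M, G *m D = c *: (A *m D) & D *m A *m D = A *m D].
Proof.
pose quot_col j w := if blk j == s then D *m w = w /\ G *m e j = c *: w else w = e j.
have [A colA] : exists A : 'M[R]_n, forall j, quot_col j (A *m e j).
  apply: matrix_of_cols => j; rewrite /quot_col.
  case: eqP => [/block_coord_proj_delta/G_div[w] | _].
    by exists w.
  by exists (e j).
pose preim_col j v := if blk j == s then D *m v = v /\ G *m v = c *: e j else v = e j.
have [Z colZ] : exists Z : 'M[R]_n, forall j, preim_col j (Z *m e j).
  apply: matrix_of_cols => j; rewrite /preim_col.
  case: eqP => [/block_coord_proj_delta/G_onto[v] | _].
    by exists v.
  by exists (e j).
have GD : G *m D = c *: (A *m D).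
  apply/matrixP => i j; rewrite !mul_mx_diag !mxE; move: (colA j); rewrite /quot_col.
  case: eqP => [_ [_ /matrixP/(_ i 0)] | _ _]; last by rewrite !mulr0.
  by rewrite !mulr1 mulmx_delta_col mxE => ->; rewrite mulmx_delta_col.
exists A, Z; split=> //.
  apply/matrixP => i j; rewrite -(mulmx_delta_col (A *m Z)) -mulmxA.
  move: (colZ j) (colA j); rewrite /preim_col /quot_col; case: eqP => [_ [vE GvE] _ | _ -> ->].
    suff -> : A *m (Z *m e j) = e j by rewrite !mxE eqxx andbT.
    apply: (scalemx_lregI c_reg).
    by rewrite -GvE -vE !mulmxA GD !scalemxAl.
  by rewrite !mxE eqxx andbT.
apply/matrixP => i j; rewrite mul_diag_mx !mul_mx_diag !mxE.
have [_ | blk_i] := eqVneq (blk i) s; first by rewrite mul1r.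
rewrite mulr0n mul0r; move: (colA j); rewrite /quot_col.
case: eqP => [_ [/block_coord_proj_supportP wE _] | _ _].
  by rewrite -mulmx_delta_col wE // mul0r.
by rewrite !mulr0.
Qed.

End BlockDivision.

Lemma map_block_coord_proj (R S : comNzRingType) (f : {rmorphism R -> S}) (n : nat)
    (blk : 'I_n -> 'I_3) (s : 'I_3) :
  map_mx f (block_coord_proj R blk s) = block_coord_proj S blk s.
Proof. by rewrite map_diag_mx; congr diag_mx; apply/matrixP => i j; rewrite !mxE rmorph_nat. Qed.

Section BlockOperator.

Variables (R : comNzRingType) (C : fieldType) (iota : {rmorphism R -> C}).
Hypothesis iota_inj : injective iota.
Variables (n : nat) (P Q : 'M[R]_n).
Hypotheses (PQ : P *m Q = 1%:M) (QP : Q *m P = 1%:M).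
Variables (blk : 'I_n -> 'I_3) (s : 'I_3) (Fz : 'M[R]_n) (c : R).
Hypothesis c_neq0 : iota c != 0.
Hypothesis F_div : forall x, block_span P blk s x ->
  exists y, block_span P blk s y /\ Fz *m x = c *: y.
Hypothesis F_onto : forall y, block_span P blk s y ->
  exists x, block_span P blk s x /\ Fz *m x = c *: y.

Local Notation D := (@block_coord_proj R n blk s).
Local Notation "M ^iota" := (map_mx iota M) (at level 8, format "M ^iota").

(* K and its inverse are defined over R, which makes the eigenvalues of K
   integral units. *)
Lemma block_span_div_operator : exists K Ki : 'M[R]_n,
  [/\ K^iota *m Ki^iota = 1%:M,
      forall y, block_span P^iota blk s y -> Fz^iota *m y = iota c *: (K^iota *m y)
    & forall y, block_span P^iota blk s y -> block_span P^iota blk s (K^iota *m y)].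
Proof.
have c_reg : GRing.lreg c.
  by move=> x y /(congr1 iota); rewrite !rmorphM => /(mulfI c_neq0)/iota_inj.
pose G := Q *m Fz *m P.
have span_coord v : D *m v = v -> block_span P blk s (P *m v).
  by move=> /block_coord_proj_supportP v_supp; exists v.
have [A [Z [AZ GD DAD]]] : exists A Z : 'M[R]_n,
    [/\ A *m Z = 1%:M, G *m D = c *: (A *m D) & D *m A *m D = A *m D].
  apply: block_div_operator => // [v /span_coord/F_div | w /span_coord/F_onto].
    move=> [_ [[w [/block_coord_proj_supportP wE ->]] FvE]]; exists w => //.
    by rewrite /G -!mulmxA FvE -scalemxAr !mulmxA QP mul1mx.
  move=> [_ [[v [/block_coord_proj_supportP vE ->]] FvE]]; exists v => //.
  by rewrite /G -!mulmxA FvE -scalemxAr !mulmxA QP mul1mx.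
pose K := P *m A *m Q; pose Pi := block_proj blk P Q s.
have KKi : K *m (P *m Z *m Q) = 1%:M.
  by rewrite /K -!mulmxA (mulmxA Q) QP mul1mx (mulmxA A) AZ mul1mx.
have FPi : Fz *m Pi = c *: (K *m Pi).
  have FzP : Fz *m P = P *m G by rewrite /G !mulmxA PQ mul1mx.
  rewrite /Pi /block_proj /K !mulmxA FzP -(mulmxA P G) GD -(mulmxA (P *m A) Q P) QP mulmx1.
  by rewrite -scalemxAr -scalemxAl !mulmxA.
have PiKPi : Pi *m K *m Pi = K *m Pi.
  rewrite /Pi /block_proj /K !mulmxA -(mulmxA (P *m D) Q P) QP mulmx1.
  rewrite -(mulmxA (P *m D *m A) Q P) -(mulmxA (P *m A) Q P) QP !mulmx1.
  by rewrite -(mulmxA P D A) -(mulmxA P (D *m A) D) DAD mulmxA.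
have map_Pi : Pi^iota = block_proj blk P^iota Q^iota s.
  by rewrite /Pi /block_proj !map_mxM map_block_coord_proj.
have PQ' : P^iota *m Q^iota = 1%:M by rewrite -map_mxM PQ map_mx1.
have QP' : Q^iota *m P^iota = 1%:M by rewrite -map_mxM QP map_mx1.
exists K, (P *m Z *m Q); split=> [|y /(block_spanP _ PQ' QP') yE|y /(block_spanP _ PQ' QP') yE].
- by rewrite -map_mxM KKi map_mx1.
- by rewrite -yE mulmxA -map_Pi -map_mxM FPi map_mxZ map_mxM -!scalemxAl mulmxA.
- apply/(block_spanP _ PQ' QP'); rewrite -map_Pi in yE *.
  by rewrite -yE !mulmxA -!map_mxM PiKPi.
Qed.

End BlockOperator.

Lemma block_span_div_operators (R : comNzRingType) (C : fieldType)
    (iota : {rmorphism R -> C}) (iota_inj : injective iota) (n : nat) (P Q : 'M[R]_n)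
    (PQ : P *m Q = 1%:M) (QP : Q *m P = 1%:M) (blk : 'I_n -> 'I_3) (Fz : 'M[R]_n)
    (c : 'I_3 -> R) (c_neq0 : forall s, iota (c s) != 0)
    (F_stab : forall s,
      (forall x, block_span P blk s x -> exists y, block_span P blk s y /\ Fz *m x = c s *: y)
   /\ (forall y, block_span P blk s y -> exists x, block_span P blk s x /\ Fz *m x = c s *: y)) :
  exists K Ki : 'I_3 -> 'M[R]_n, forall s,
  [/\ map_mx iota (K s) *m map_mx iota (Ki s) = 1%:M,
      forall y, block_span (map_mx iota P) blk s y ->
        map_mx iota Fz *m y = iota (c s) *: (map_mx iota (K s) *m y)
    & forall y, block_span (map_mx iota P) blk s y ->
        block_span (map_mx iota P) blk s (map_mx iota (K s) *m y)].
Proof.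
pose div_op s (KKi : 'M[R]_n * 'M[R]_n) :=
  [/\ map_mx iota KKi.1 *m map_mx iota KKi.2 = 1%:M,
      forall y, block_span (map_mx iota P) blk s y ->
        map_mx iota Fz *m y = iota (c s) *: (map_mx iota KKi.1 *m y)
    & forall y, block_span (map_mx iota P) blk s y ->
        block_span (map_mx iota P) blk s (map_mx iota KKi.1 *m y)].
have [KKi KKiP] : exists KKi : 'I_3 -> 'M[R]_n * 'M[R]_n, forall s, div_op s (KKi s).
  apply: (@fin_all_exists _ (fun=> _) div_op) => s.
  have [K [Ki KP]] := block_span_div_operator iota_inj PQ QP (c_neq0 s) (F_stab s).1 (F_stab s).2.
  by exists (K, Ki).
by exists (fun s => (KKi s).1), (fun s => (KKi s).2).
Qed.

Lemma block_span_conj_rev (R : comNzRingType) (C : numClosedFieldType)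
    (iota : {rmorphism R -> C}) (iota_inj : injective iota) (p : nat) (p_gt0 : (0 < p)%N)
    (p_nonunit : forall y : R, p%:R * y <> 1) (a : nat) (a_gt0 : (0 < a)%N)
    (n : nat) (P Q : 'M[C]_n.+1) (PQ : P *m Q = 1%:M) (QP : Q *m P = 1%:M)
    (blk : 'I_n.+1 -> 'I_3) (F : 'M[C]_n.+1) (F_real : map_mx (@Num.conj C) F = F)
    (F_abs : forall z, eigenvalue F z -> `|z| = p%:R ^+ a) (K Ki : 'I_3 -> 'M[R]_n.+1)
    (KKi : forall s, map_mx iota (K s) *m map_mx iota (Ki s) = 1%:M)
    (F_K : forall s y, block_span P blk s y ->
      F *m y = (p%:R ^+ a) ^+ s *: (map_mx iota (K s) *m y))
    (K_stab : forall s y, block_span P blk s y -> block_span P blk s (map_mx iota (K s) *m y))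
    (s : 'I_3) (y : 'cV[C]_n.+1) :
  block_span P blk s y -> block_span P blk (rev_ord s) (conj_vec y).
Proof.
have V_sub := block_span_subspace blk P.
apply: (conj_block_rev V_sub _ (block_span_decomp blk PQ) (block_span_direct PQ QP) F_real
  (H := fun s => (p%:R ^+ a) ^+ s *: map_mx iota (K s))).
- by move=> t x Vx; rewrite (F_K t x Vx); apply: is_subspaceZ (V_sub t) (K_stab _ _ Vx).
- by move=> t x /(F_K t x) ->; rewrite scalemxAl.
- move=> t u z /= z_t z_u /F_abs.
  exact: (eigenvalue_weights_sum iota_inj p_gt0 p_nonunit a_gt0 (KKi t) (KKi u) z_t z_u).
Qed.

Theorem lemma3p3
  (p a : nat) (pr_p : prime p) (a_gt0 : (0 < a)%N)
  (Zp : comNzRingType) (hZp : is_padic_integers Zp p)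
  (C : numClosedFieldType)
  (iota : {rmorphism Zp -> C}) (iota_inj : injective iota)
  (n : nat) (B F : 'M[int]_n)
  (* (M1) *)
  (B_sym : B^T = B) (B_unimod : unimodular B) (B_even : even_form B)
  (B_sign : has_signature B 3 19)
  (* (M2) *)
  (HF_form : F^T *m B *m F = ((p ^ a) ^ 2)%N%:R *: B)
  (* (M3) *)
  (HF_ss : diagonalizable (intmx C F))
  (HF_abs : forall z : C, eigenvalue (intmx C F) z -> `|z| = (p ^ a)%N%:R)
  (* (M4): a Zp-basis P of M (x) Zp = Zp^n and a partition of it into
     blocks 0,1,2 of sizes 1,20,1 spanning M^0, M^1, M^2 *)
  (P Q : 'M[Zp]_n) (PQ : P *m Q = 1%:M) (QP : Q *m P = 1%:M)
  (blk : 'I_n -> 'I_3)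
  (blk0 : #|[set i | blk i == 0]| = 1%N)
  (blk1 : #|[set i | blk i == 1]| = 20%N)
  (blk2 : #|[set i | blk i == 2%:R]| = 1%N)
  (HF_stab : forall s : 'I_3,
     (forall x, block_span P blk s x ->
        exists y, block_span P blk s y /\ intmx Zp F *m x = ((p ^ a) ^ s)%N%:R *: y)
     /\ (forall y, block_span P blk s y ->
        exists x, block_span P blk s x /\ intmx Zp F *m x = ((p ^ a) ^ s)%N%:R *: y)) :
  let MC := fun s : 'I_3 => block_span (map_mx iota P) blk s in
  (forall s : 'I_3,
     (forall y, MC s y -> MC (rev_ord s) (conj_vec y)) /\
     (forall z, MC (rev_ord s) z -> exists y, MC s y /\ conj_vec y = z))
  /\ Z_hodge_structure_wt2 MC.
Proof.
destruct n as [|n].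
  by move: (max_card [set i | blk i == 0]); rewrite blk0 card_ord.
move=> MC.
have PQ' : map_mx iota P *m map_mx iota Q = 1%:M by rewrite -map_mxM PQ map_mx1.
have QP' : map_mx iota Q *m map_mx iota P = 1%:M by rewrite -map_mxM QP map_mx1.
have q_weight s : iota ((p ^ a) ^ s)%N%:R = (p%:R ^+ a) ^+ s :> C by rewrite rmorph_nat !natrX.
have q_neq0 s : iota ((p ^ a) ^ s)%N%:R != 0.
  by rewrite q_weight !expf_neq0 // pnatr_eq0 -lt0n prime_gt0.
have [K [Ki /all_and3[KKi F_K K_stab]]] := block_span_div_operators iota_inj PQ QP q_neq0 HF_stab.
have MC_conj s y : MC s y -> MC (rev_ord s) (conj_vec y).
  apply: (block_span_conj_rev iota_inj (prime_gt0 pr_p) (padic_nat_p_nonunit pr_p hZp)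
    a_gt0 PQ' QP' (F := intmx C F) _ _ KKi _ K_stab).
  - by apply/matrixP => i j; rewrite !mxE rmorph_int.
  - by move=> z /HF_abs; rewrite natrX.
  - have mapF : map_mx iota (intmx Zp F) = intmx C F.
      by apply/matrixP => i j; rewrite !mxE rmorph_int.
    by move=> t x /F_K; rewrite mapF q_weight.
have conj_vecK : involutive (@conj_vec C n.+1).
  by move=> y; apply/matrixP => i j; rewrite !mxE conjCK.
split.
  move=> s; split=> [|z /MC_conj]; first exact: MC_conj.
  by rewrite rev_ordK => MCz; exists (conj_vec z); rewrite conj_vecK.
split=> [|y||]; [exact: block_span_subspace | | exact: block_span_direct PQ' QP' | exact: MC_conj].
have [y0 [y1 [y2 decomp]]] := block_span_decomp blk PQ' y.
by exists y0, y1, y2.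
Qed.
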